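(* Assume the standing setup, let $(\hat\sigma,\varphi)$ be fine and let $\nu,\lambda$ be the fixed conformal measure. Then for every finite set $D\subset E$ and every integer $n\ge0$ there exists $\beta=\beta_{D,n}>0$ such that $$\nu_x([\omega]_x)\ge\beta$$ for every integer $0\le k\le n$, every word $\omega\in D_x^k$ and $m$-a.e. $x\in X$.
   Context: Standing setup. $(X,\mathcal F,m)$ is a complete probability space and $\theta:X\to X$ an invertible measurable $m$-preserving map. $E=\mathbb N$, and $x\mapsto A(x)=(A_{ij}(x))_{i,j\in E}$ is a measurable map into $\{0,1\}$-matrices. $E_x^n$ is the set of words $\omega_0\cdots\omega_n\in E^{n+1}$ with $A_{\omega_i\omega_{i+1}}(\theta^i(x))=1$ for $0\le i\le n-1$; for $D\subset E$, $D_x^n$ is the set of words in $E_x^n$ with all letters in $D$; $E_x^\infty$ is the set of $\omega\in E^{\mathbb N}$ with $A_{\omega_i\omega_{i+1}}(\theta^i(x))=1$ for all $i$. For $\omega\in E_x^n$, $[\omega]_x=\{\tau\in E_x^\infty:\tau_0\cdots\tau_n=\omega\}$; $[F]_x=\{\tau\in E_x^\infty:\tau_0\in F\}$, $[0,\dots,l]_x=[\{0,\dots,l\}]_x$; complements in $E_x^\infty$. Metric $d(\omega,\tau)=e^{-\min\{n:\omega_n\ne\tau_n\}}$. $\sigma_x:E_x^\infty\to E_{\theta(x)}^\infty$ the shift, $\Omega=\bigcup_x\{x\}\times E_x^\infty$, $\hat\sigma(x,\omega)=(\theta(x),\sigma_x\omega)$, $\varphi_x=\varphi(x,\cdot)$.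 $\hat\sigma$ is topologically mixing: for all $a,b\in E$ there is $N$ such that for all $n\ge N$ and all $x$ there is a word $\omega$ of length $n+1$ with $a\omega b\in E_x^{n+2}$. Fix $\alpha>0$; $v_\alpha(g)=\sup\{|g(\tau)-g(\omega)|/d(\tau,\omega)^\alpha:\tau\ne\omega,\tau_0=\omega_0\}$. Summable potential: measurable $\varphi:\Omega\to\mathbb R$, $\varphi_x$ continuous, $\operatorname{ess\,sup}_xv_\alpha(\varphi_x)<\infty$, for each $e$ constants $0<c_e<C_e$ with $c_e\le e^{\varphi_x}\le C_e$ on $[e]_x$ a.e., and $\lim_{l\to\infty}\operatorname{ess\,sup}_x\sup\mathcal L_x(1_{[0,\dots,l]_x^c})=0$, where $\mathcal L_xg(\omega)=\sum_{e:\,A_{e\omega_0}(x)=1}g(e\omega)e^{\varphi_x(e\omega)}$, $\omega\in E_{\theta(x)}^\infty$. (A): for each $e$ some $M_e>0$ with $M_e^{-1}\le\mathcal L_x1$ on $[e]_{\theta(x)}$ a.e.; (B): $\lim_{e\to\infty}\operatorname{ess\,sup}_x\sup_{[e]_{\theta(x)}}\mathcal L_x1=0$; (C): there are $0<\kappa<1/4$ and finite $F\subset E$ with $\sup\mathcal L_x(1_{E_x^\infty\setminus[F]_x})\le\kappa\inf_{[F]_{\theta(x)}}\mathcal L_x1$ a.e. Fine: $\varphi$ summable and (A),(B),(C). Random measures: probability measures on $\Omega$ with marginal $m$ and disintegrations $\nu_x$ (probabilities on $E_x^\infty$). Fixed conformal measure: a random measure $\nu$ with a measurable $\lambda:X\to(0,\infty)$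 such that $\int\mathcal L_xg\,d\nu_{\theta(x)}=\lambda_x\int g\,d\nu_x$ for all bounded continuous $g$ on $E_x^\infty$ and a.e. $x$, with $\operatorname{ess\,sup}|\log\lambda|<\infty$ and $\nu_x([F]_x)\ge1/2$ for a.e. $x$, $F$ being the set from (C) (the conformal measure constructed in the paper has these properties). *)

From HB Require Import structures.
From mathcomp Require Import all_boot all_order all_algebra.
From mathcomp Require Import all_classical all_reals all_analysis.
From mathcomp Require Import measurable_realfun.
Set Implicit Arguments. Unset Strict Implicit. Unset Printing Implicit Defensive.
Import Order.TTheory GRing.Theory Num.Theory.
Import numFieldNormedType.Exports.
Local Open Scope classical_set_scope.
Local Open Scope ring_scope.

(* The space of one-sided sequences E^N with E = nat, equipped with the
   sigma-algebra generated by one-coordinate cylinders (= Borel sigma-algebra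
   of the metric d below). *)
Definition cyl_gen : set (set (nat -> nat)) :=
  fun S => exists i e, S = [set t | t i = e].
Definition Seq := g_sigma_algebraType cyl_gen.

Section Defs.
Context {d : measure_display} {X : measurableType d} {R : realType}.
Variables (theta : X -> X) (A : X -> nat -> nat -> bool).

Definition Einf (x : X) : set Seq :=
  [set w | forall i, A (iter i theta x) (w i) (w i.+1)].

Definition Ewords (x : X) (n : nat) : set (seq nat) :=
  [set w | size w = n.+1 /\
     forall i, (i < n)%N -> A (iter i theta x) (nth 0%N w i) (nth 0%N w i.+1)].

Definition Dwords (D : seq nat) (x : X) (n : nat) : set (seq nat) :=
  [set w | Ewords x n w /\ all (fun e => e \in D) w].

Definition cyl (x : X) (w : seq nat) : set Seq :=
  [set t | Einf x t /\ forall i, (i < size w)%N -> t i = nth 0%N w i].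

Definition econs (e : nat) (w : nat -> nat) : nat -> nat :=
  fun n => if n is n'.+1 then w n' else e.

Definition seqdist (w t : nat -> nat) : R :=
  match pselect (exists n, w n != t n) with
  | left h => expR (- ((ex_minn h)%:R))
  | right _ => 0
  end.

Definition cont_on (S : set Seq) (g : Seq -> R) : Prop :=
  forall t, S t -> forall eps : R, 0 < eps -> exists2 del : R, 0 < del &
    forall t', S t' -> seqdist t t' < del -> `|g t' - g t| < eps.

Definition bounded_on (S : set Seq) (g : Seq -> R) : Prop :=
  exists M : R, forall t, S t -> `|g t| <= M.

Variable phi : X -> Seq -> R.

Definition Lpos (x : X) (g : Seq -> R) (w : Seq) : \bar R :=
  (\sum_(e <oo) (if A x e (w 0%N)
                 then (g (econs e w) * expR (phi x (econs e w)))%:E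
                 else 0%E))%E.

Definition Lop (x : X) (g : Seq -> R) (w : Seq) : R :=
  limn (series (fun e : nat => if A x e (w 0%N)
                 then g (econs e w) * expR (phi x (econs e w)) else 0)).

End Defs.

From HB Require Import structures.
From mathcomp Require Import all_boot all_order all_algebra.
From mathcomp Require Import all_classical all_reals all_analysis.
From mathcomp Require Import measurable_realfun.
From mathcomp Require Import zify lra.
Set Implicit Arguments. Unset Strict Implicit. Unset Printing Implicit Defensive.
Import Order.TTheory GRing.Theory Num.Theory.
Import numFieldNormedType.Exports.
Local Open Scope classical_set_scope.
Local Open Scope ring_scope.

(* Conformality applied to the indicator of a cylinder [a u] gives
   lam_x nu_x([a u]_x) >= (inf of e^phi_x on [a]) nu_{theta x}([u]_{theta x}),
   and lam is essentially bounded, so following a word along the orbit loses at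
   most a constant factor per letter as long as its letters stay in a finite
   set.  Condition (B) keeps them there: a transition a -> e with e large would
   make L_x 1 small on [e], whereas it is at least inf e^phi_x on [a e ...].
   Extending a word of D_x^k by mixing words of bounded length to each letter
   f of F gives disjoint subcylinders, and summing the chained estimates
   against nu_y([F]) >= 1/2 yields the uniform lower bound. *)

(* [Lop] is not known to be measurable; the nonnegative integral, a supremum
   over simple minorants, is monotone regardless. *)
Lemma ge0_le_integral_nonmeasurable d (T : measurableType d) (R : realType)
    (mu : {measure set T -> \bar R}) (D : set T) (f1 f2 : T -> \bar R) :
  (forall x, D x -> 0 <= f1 x)%E -> (forall x, D x -> f1 x <= f2 x)%E ->
  (\int[mu]_(x in D) f1 x <= \int[mu]_(x in D) f2 x)%E.
Proof.
move=> f10 f12; have f20 x : D x -> (0 <= f2 x)%E.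
  by move=> Dx; rewrite (le_trans (f10 _ Dx)) ?f12.
rewrite !ge0_integralE//; apply: ereal_sup_le => _ [h hf1 <-]; exists h => // x.
exact: le_trans (hf1 x) (lee_restrict f12 x).
Qed.

Lemma measure_bigsetU_seq d (T : measurableType d) (R : realType)
    (mu : {measure set T -> \bar R}) (I : choiceType) (s : seq I)
    (S : I -> set T) :
  uniq s -> (forall i, measurable (S i)) ->
  (forall i j, i != j -> S i `&` S j = set0) ->
  mu (\big[setU/set0]_(i <- s) S i) = (\sum_(i <- s) mu (S i))%E.
Proof.
move=> us mS dS; rewrite -bigcup_seq measure_fin_bigcup.
- exact/esym/fsbig_seq.
- exact: finite_seq.
- move=> i j _ _ [t [Sit Sjt]]; have [//|/dS ij] := eqVneq i j.
  by have : (S i `&` S j) t by []; rewrite ij.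
- by move=> i _; exact: mS.
Qed.

Lemma limn_series_single (R : realType) (f : nat -> R) a :
  (forall e, e != a -> f e = 0) -> limn (series f) = f a.
Proof.
move=> f0; apply: cvg_lim => //; apply: cvg_near_cst; near=> n.
rewrite /series /= (bigD1_seq a) ?mem_iota ?iota_uniq //=; last first.
  by rewrite subn0; near: n; exists a.+1.
by rewrite big1 ?addr0 // => i; exact: f0.
Unshelve. all: by end_near. Qed.

Lemma ae_preimage d (X : measurableType d) (R : realType)
    (m : {measure set X -> \bar R}) (theta : X -> X) (P : X -> Prop) :
  measurable_fun setT theta ->
  (forall B : set X, measurable B -> m (theta @^-1` B) = m B) ->
  {ae m, forall x, P x} -> {ae m, forall x, P (theta x)}.
Proof.
move=> mtheta thetaP [N [mN N0 PN]]; exists (theta @^-1` N); split.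
- by rewrite -[_ @^-1` _]setTI; exact: mtheta.
- by rewrite thetaP.
- by move=> t /= nP; apply: PN.
Qed.

Lemma ae_orbit d (X : measurableType d) (R : realType)
    (m : {measure set X -> \bar R}) (theta : X -> X) (P : X -> Prop) :
  measurable_fun setT theta ->
  (forall B : set X, measurable B -> m (theta @^-1` B) = m B) ->
  {ae m, forall x, P x} -> {ae m, forall x, forall j, P (iter j theta x)}.
Proof.
move=> mtheta thetaP HP; apply: ae_foralln; elim=> [|j IH] //.
have := ae_preimage (P := fun y => P (iter j theta y)) mtheta thetaP IH.
by apply: filterS => x; rewrite iterSr.
Qed.

Section shift_space.
Context {d : measure_display} {X : measurableType d} {R : realType}.
Variables (theta : X -> X) (A : X -> nat -> nat -> bool).
Local Notation Einf := (Einf theta A).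
Local Notation Ewords := (Ewords theta A).
Local Notation cyl := (cyl theta A).

Lemma measurable_coord (i e : nat) : measurable [set t : Seq | t i = e].
Proof. by apply: sub_sigma_algebra; exists i, e. Qed.

Lemma measurable_Einf x : measurable (Einf x).
Proof.
have -> : Einf x = \bigcap_i \bigcup_p \bigcup_q
    (if A (iter i theta x) p q then [set t : Seq | t i = p] `&` [set t | t i.+1 = q]
     else set0).
  apply/seteqP; split=> t /=.
    by move=> Et i _; exists (t i) => //; exists (t i.+1) => //; rewrite Et.
  move=> Et i; have [p _ [q _]] := Et i Logic.I.
  by case: ifP => // Apq [/= -> ->].
apply: bigcapT_measurable => i; apply: bigcupT_measurable => p.
apply: bigcupT_measurable => q; case: ifP => _ //.
by apply: measurableI; exact: measurable_coord.
Qed.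

Lemma measurable_cyl x w : measurable (cyl x w).
Proof.
have -> : cyl x w = Einf x `&` \bigcap_i
    (if (i < size w)%N then [set t : Seq | t i = nth 0%N w i] else setT).
  apply/seteqP; split=> t /=.
    by move=> [Et wt]; split=> // i _; case: ifP => // /wt.
  by move=> [Et wt]; split=> // i iw; have := wt i Logic.I; rewrite iw.
apply: measurableI; first exact: measurable_Einf.
by apply: bigcapT_measurable => i; case: ifP => _ //; exact: measurable_coord.
Qed.

Lemma cyl_sub_Einf x w : cyl x w `<=` Einf x.
Proof. by move=> t []. Qed.

Lemma cyl_cat_sub x w v : cyl x (w ++ v) `<=` cyl x w.
Proof.
move=> t [Et wvt]; split=> // i iw.
by rewrite wvt ?nth_cat ?iw // size_cat ltn_addr.
Qed.

Lemma Einf_econs x a w : Einf (theta x) w -> A x a (w 0%N) ->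
  Einf x (econs a w).
Proof. by move=> Ew Aa [|i] //; rewrite iterSr; exact: Ew. Qed.

Lemma Ewords_cons x n a u : Ewords x n.+1 (a :: u) ->
  A x a (nth 0%N u 0) /\ Ewords (theta x) n u.
Proof.
move=> [/= [su] Eau]; split; first exact: (Eau 0%N).
by split=> // i ni; rewrite -iterSr; exact: (Eau i.+1).
Qed.

Lemma Ewords_cat x k n w v : Ewords x k w ->
  Ewords (iter k theta x) n (nth 0%N w k :: v) -> Ewords x (k + n) (w ++ v).
Proof.
have nth_shift j : size w = k.+1 ->
    nth 0%N (w ++ v) (k + j) = nth 0%N (nth 0%N w k :: v) j.
  move=> sw; case: j => [|j]; first by rewrite addn0 nth_cat sw ltnSn.
  by rewrite nth_cat sw ltnNge addnS ltnS leq_addr /=; congr nth; lia.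
move=> [sw Ew] [/= [sv] Ev]; split; first by rewrite size_cat sw sv addSn.
move=> i ikn; have [ik|ki] := ltnP i k.
  by rewrite !nth_cat sw ltnS (ltnW ik) ltnS ik; exact: Ew.
have -> : i = (k + (i - k))%N by lia.
rewrite !nth_shift // -addnS nth_shift // addnC iterD.
by apply: Ev; rewrite ltn_subLR.
Qed.

Lemma Einf_exists_head : (forall z a, exists b, A z a b) ->
  forall y e, exists2 t : Seq, Einf y t & t 0%N = e.
Proof.
move=> succ y e; have [next Anext] := choice (fun za : X * nat => succ za.1 za.2).
pose t := fix t i := if i is j.+1 then next (iter j theta y, t j) else e.
by exists t => // i; exact: (Anext (_, _)).
Qed.

Lemma seqdist_lt_agree (t t' : Seq) (n : nat) :
  @seqdist R t t' < expR (- n%:R) -> forall i, (i <= n)%N -> t i = t' i.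
Proof.
rewrite /seqdist; case: pselect => [h|nh]; last first.
  by move=> _ i _; apply: contra_notP nh => /eqP ?; exists i.
case: ex_minnP => j tj jmin; rewrite ltr_expR ltrN2 ltr_nat => nj i iK.
apply/eqP; apply: contraTT (leq_ltn_trans iK nj); rewrite -leqNgt.
exact: jmin.
Qed.

Lemma cont_on_indic_cyl x w : cont_on (Einf x) (\1_(cyl x w) : Seq -> R).
Proof.
move=> t Et eps eps0; exists (expR (- (size w)%:R)); first exact: expR_gt0.
move=> t' Et' /seqdist_lt_agree tt'.
suff -> : (\1_(cyl x w) t' : R) = \1_(cyl x w) t by rewrite subrr normr0.
have cyl_tt' : cyl x w t' <-> cyl x w t.
  split=> -[E wt]; split=> // i iw; first by rewrite tt' ?(ltnW iw) // wt.
  by rewrite -tt' ?(ltnW iw) // wt.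
rewrite /indic; have [wt|wt] := pselect (cyl x w t).
  by rewrite (mem_set wt) (mem_set (proj2 cyl_tt' wt)).
by rewrite (memNset wt) memNset // => /cyl_tt'.
Qed.

End shift_space.

Section conformal_cylinders.
Context {d : measure_display} {X : measurableType d} {R : realType}.
Variables (theta : X -> X) (A : X -> nat -> nat -> bool) (phi : X -> Seq -> R).
Local Notation Einf := (Einf theta A).
Local Notation Ewords := (Ewords theta A).
Local Notation cyl := (cyl theta A).

Lemma Lop_indic_cyl x a u w :
  Lop A phi x (\1_(cyl x (a :: u)) : Seq -> R) w =
  if A x a (w 0%N)
  then \1_(cyl x (a :: u)) (econs a w) * expR (phi x (econs a w)) else 0.
Proof.
rewrite /Lop (@limn_series_single _ _ a) // => e ea.
case: ifP => // _; rewrite /indic memNset ?mul0r // => -[_ eau].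
by have /= ea' := eau 0%N isT; rewrite ea' eqxx in ea.
Qed.

Lemma Lop_indic_cyl_ge x a b u w (c : R) : 0 <= c ->
  (forall t, Einf x t -> t 0%N = a -> c <= expR (phi x t)) ->
  A x a b -> Einf (theta x) w ->
  c * \1_(cyl (theta x) (b :: u)) w <=
  Lop A phi x (\1_(cyl x (a :: b :: u)) : Seq -> R) w.
Proof.
move=> c0 c_le Aab Ew; rewrite Lop_indic_cyl.
have [wbu|wbu] := pselect (cyl (theta x) (b :: u) w); last first.
  rewrite /indic (memNset wbu) mulr0.
  by case: ifP => // _; apply: mulr_ge0; rewrite ?expR_ge0 // /indic; case: (_ \in _).
have Aw : A x a (w 0%N) by case: wbu => _ /(_ 0%N isT) ->.
have Eaw := Einf_econs Ew Aw.
have abuw : cyl x (a :: b :: u) (econs a w) by split=> // -[|i] //=; case: wbu => _; apply.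
by rewrite Aw /indic (mem_set wbu) (mem_set abuw) mulr1 mul1r; exact: c_le.
Qed.

Lemma Lpos1_ge x a w : A x a (w 0%N) ->
  ((expR (phi x (econs a w)))%:E <= Lpos A phi x (fun _ => 1%R) w)%E.
Proof.
move=> Aa; have term_ge0 e : (0 <= if A x e (w 0%N)
    then (1 * expR (phi x (econs e w)))%:E else 0)%E.
  by case: ifP => // _; rewrite lee_fin mul1r expR_ge0.
rewrite /Lpos; apply: le_trans (nneseries_lim_ge a.+1 (fun e _ _ => term_ge0 e)).
rewrite big_nat_recr //= Aa mul1r leeDr //.
by apply: sume_ge0 => e _; exact: term_ge0.
Qed.

Variables (nu : X -> probability Seq R) (lam : X -> R).

Definition conformal_at (y : X) : Prop :=
  forall g : Seq -> R, bounded_on (Einf y) g -> cont_on (Einf y) g ->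
  (\int[nu (theta y)]_(w in Einf (theta y)) (Lop A phi y g w)%:E
    = (lam y)%:E * \int[nu y]_(w in Einf y) (g w)%:E)%E.

Lemma integral_indic_cyl y u :
  (\int[nu y]_(w in Einf y) (\1_(cyl y u) w : R)%:E = nu y (cyl y u))%E.
Proof.
rewrite integral_indic ?setIidl //; [exact: cyl_sub_Einf|exact: measurable_Einf|].
exact: measurable_cyl.
Qed.

Lemma conformal_at_cyl_cons x a b u (c : R) : conformal_at x -> 0 <= c ->
  (forall t, Einf x t -> t 0%N = a -> c <= expR (phi x t)) -> A x a b ->
  (c%:E * nu (theta x) (cyl (theta x) (b :: u))
    <= (lam x)%:E * nu x (cyl x (a :: b :: u)))%E.
Proof.
move=> conf c0 c_le Aab; rewrite -!integral_indic_cyl -conf; last 2 first.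
- by exists 1 => t _; rewrite /indic; case: (_ \in _); rewrite ?normr1 ?normr0.
- exact: cont_on_indic_cyl.
rewrite -ge0_integralZl_EFin //; last 2 first.
- exact: measurable_Einf.
- by apply/measurable_EFinP/measurable_indic; exact: measurable_cyl.
apply: ge0_le_integral_nonmeasurable => t Et; rewrite -EFinM lee_fin.
  by apply: mulr_ge0 => //; rewrite /indic; case: (_ \in _).
exact: Lop_indic_cyl_ge.
Qed.

Variables (c : nat -> R) (L : R).

Definition regular_point (y : X) : Prop :=
  [/\ conformal_at y,
      forall e t, Einf y t -> t 0%N = e -> c e <= expR (phi y t),
      0 < lam y & lam y <= L].

Lemma nu_cyl_cons_ge x a b u (r : R) : regular_point x -> 0 <= r ->
  r * L <= c a -> A x a b ->
  (r%:E * nu (theta x) (cyl (theta x) (b :: u)) <= nu x (cyl x (a :: b :: u)))%E.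
Proof.
move=> [conf c_le lam0 lamL] r0 rLc Aab.
have c0 : 0 <= c a by apply: le_trans rLc; rewrite mulr_ge0 // (le_trans _ lamL) ?ltW.
have conf_ineq := conformal_at_cyl_cons u conf c0 (c_le a) Aab.
apply: (@le_trans _ _ ((c a / lam x)%:E * nu (theta x) (cyl (theta x) (b :: u)))%E).
  apply: lee_wpmul2r; first exact: measure_ge0.
  by rewrite lee_fin ler_pdivlMr // (le_trans _ rLc) // ler_wpM2l.
rewrite mulrC EFinM -muleA; apply: le_trans (lee_wpmul2l _ conf_ineq) _.
  by rewrite lee_fin invr_ge0 ltW.
by rewrite muleA -EFinM mulVf ?mul1e // gt_eqF.
Qed.

Lemma nu_cyl_chain x (r : R) (B : nat) u a :
  (forall j, regular_point (iter j theta x)) -> 0 <= r ->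
  (forall e, (e < B)%N -> r * L <= c e) ->
  Ewords x (size u) (a :: u) -> all (fun e => e < B)%N (a :: u) ->
  ((r ^+ size u)%:E * nu (iter (size u) theta x)
       (cyl (iter (size u) theta x) [:: last a u])
    <= nu x (cyl x (a :: u)))%E.
Proof.
move=> reg r0 rLc; elim: u a x reg => [|b u IH] a x reg Eau Bau.
  by rewrite expr0 mul1e.
have [Aab Ebu] := Ewords_cons Eau; case/andP: Bau => aB Bbu.
have reg' j : regular_point (iter j theta (theta x)) by rewrite -iterSr.
apply: le_trans (nu_cyl_cons_ge u (reg 0%N) r0 (rLc a aB) Aab).
rewrite /= exprS EFinM -muleA -iterS iterSr; apply: lee_wpmul2l; first by rewrite lee_fin.
exact: IH.
Qed.

End conformal_cylinders.

Definition reach_bound (e0 : nat -> nat) (B : nat) (j : nat) : nat :=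
  iter j (fun B => maxn B (\max_(b < B) e0 b)) B.

Lemma reach_bound_mono e0 B : {homo reach_bound e0 B : i j / (i <= j)%N}.
Proof.
move=> i j /subnKC <-; elim: (j - i)%N => [|k IH]; first by rewrite addn0.
by rewrite addnS /reach_bound iterS (leq_trans IH) ?leq_maxl.
Qed.

Lemma reach_bound_succ e0 B j b : (b < reach_bound e0 B j)%N ->
  (e0 b <= reach_bound e0 B j.+1)%N.
Proof.
move=> bj; rewrite /reach_bound iterS (leq_trans _ (leq_maxr _ _)) //.
exact: (@leq_bigmax _ (fun i : 'I__ => e0 i) (Ordinal bj)).
Qed.

Section letter_bounds.
Context {d : measure_display} {X : measurableType d} {R : realType}.
Variables (theta : X -> X) (A : X -> nat -> nat -> bool) (phi : X -> Seq -> R).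
Local Notation Einf := (Einf theta A).
Local Notation Ewords := (Ewords theta A).

Lemma transition_lt x a e (c : R) (e0 : nat) : 0 < c ->
  (forall t, Einf x t -> t 0%N = a -> c <= expR (phi x t)) ->
  (forall e', (e0 <= e')%N -> forall w, Einf (theta x) w -> w 0%N = e' ->
     (Lpos A phi x (fun _ => 1%R) w <= (c / 2)%:E)%E) ->
  (exists2 t : Seq, Einf (theta x) t & t 0%N = e) -> A x a e -> (e < e0)%N.
Proof.
move=> c0 c_le L1_le [t Et <-] Aat; rewrite ltnNge; apply/negP => e0t.
have := le_trans (Lpos1_ge phi Aat) (L1_le _ e0t _ Et erefl).
rewrite lee_fin => /(le_trans (c_le _ (Einf_econs Et Aat) erefl)); lra.
Qed.

Lemma Ewords_reach_bound y (e0 : nat -> nat) (B n : nat) v :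
  (forall j a e, A (iter j theta y) a e -> (e < e0 a)%N) ->
  Ewords y n v -> (nth 0%N v 0 < B)%N ->
  all (fun e => e < reach_bound e0 B n)%N v.
Proof.
move=> trans_lt [sv Ev] v0B.
have nth_lt j : (j <= n)%N -> (nth 0%N v j < reach_bound e0 B j)%N.
  elim: j => [|j IH] // jn.
  exact: leq_trans (trans_lt _ _ _ (Ev j jn)) (reach_bound_succ (IH (ltnW jn))).
apply/(all_nthP 0%N) => j; rewrite sv ltnS => jn.
exact: leq_trans (nth_lt j jn) (reach_bound_mono _ _ jn).
Qed.

End letter_bounds.

Section cylinder_sums.
Context {d : measure_display} {X : measurableType d} {R : realType}.
Variables (theta : X -> X) (A : X -> nat -> nat -> bool).
Variable P : {measure set Seq -> \bar R}.
Local Notation Einf := (Einf theta A).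
Local Notation cyl := (cyl theta A).

Lemma sum_cyl_extensions_le x w N (W : nat -> seq nat) (s : seq nat) :
  uniq s -> (forall f, exists v, W f = w ++ v) ->
  (forall f, (N < size (W f))%N /\ nth 0%N (W f) N = f) ->
  (\sum_(f <- s) P (cyl x (W f)) <= P (cyl x w))%E.
Proof.
move=> us Wext WN; rewrite -measure_bigsetU_seq //; last 2 first.
- by move=> f; exact: measurable_cyl.
- move=> f g fg; apply/seteqP; split => // t [[_ Wft] [_ Wgt]].
  have [Nf Wf] := WN f; have [Ng Wg] := WN g.
  by move: fg; rewrite -Wf -Wg -(Wft _ Nf) -(Wgt _ Ng) eqxx.
apply: le_measure; rewrite ?inE.
- by apply: bigsetU_measurable => f _; exact: measurable_cyl.
- exact: measurable_cyl.
- rewrite -bigcup_seq => t [f _]; have [v ->] := Wext f; exact: cyl_cat_sub.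
Qed.

Lemma sum_cyl_heads y (F : seq nat) :
  (\sum_(f <- undup F) P (cyl y [:: f]) = P [set t | Einf y t /\ t 0%N \in F])%E.
Proof.
rewrite -measure_bigsetU_seq ?undup_uniq //; last 2 first.
- by move=> f; exact: measurable_cyl.
- move=> f g fg; apply/seteqP; split => // t [[_ ft] [_ gt]].
  by move: fg; have /= <- := ft 0%N isT; have /= <- := gt 0%N isT; rewrite eqxx.
congr (P _); rewrite -bigcup_seq; apply/seteqP; split => t.
  by move=> [f /= fF [Et ft]]; split => //; rewrite (ft 0%N isT) -mem_undup.
move=> [Et tF]; exists (t 0%N); first by rewrite /= mem_undup.
by split => // -[|i].
Qed.

End cylinder_sums.

Section lower_bound.
Context {d : measure_display} {X : measurableType d} {R : realType}.
Variables (theta : X -> X) (A : X -> nat -> nat -> bool) (phi : X -> Seq -> R).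
Variables (nu : X -> probability Seq R) (lam : X -> R).
Variables (c : nat -> R) (L : R) (e0 : nat -> nat) (F : seq nat).
Local Notation Einf := (Einf theta A).
Local Notation Ewords := (Ewords theta A).
Local Notation cyl := (cyl theta A).

Definition good_point (y : X) : Prop :=
  [/\ regular_point theta A phi nu lam c L y,
      forall a e, A y a e -> (e < e0 a)%N &
      ((2^-1)%:E <= nu y [set t | Einf y t /\ t 0%N \in F])%E].

Lemma good_point_intro y :
  conformal_at theta A phi nu lam y ->
  (forall e, 0 < c e) ->
  (forall e t, Einf y t -> t 0%N = e -> c e <= expR (phi y t)) ->
  0 < lam y -> lam y <= L ->
  (forall a e, (e0 a <= e)%N -> forall w, Einf (theta y) w -> w 0%N = e ->
     (Lpos A phi y (fun _ => 1%R) w <= (c a / 2)%:E)%E) ->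
  (forall z a, exists b, A z a b) ->
  ((2^-1)%:E <= nu y [set t | Einf y t /\ t 0%N \in F])%E ->
  good_point y.
Proof.
move=> conf c0 c_le lam0 lamL L1_le succ halfF; split => // a e.
apply: transition_lt (c0 a) (c_le a) (L1_le a) _.
exact: Einf_exists_head.
Qed.

Lemma ae_good_orbit (m : {measure set X -> \bar R}) :
  measurable_fun setT theta ->
  (forall B : set X, measurable B -> m (theta @^-1` B) = m B) ->
  {ae m, forall x, conformal_at theta A phi nu lam x} ->
  (forall e, 0 < c e) ->
  (forall e, {ae m, forall x t, Einf x t -> t 0%N = e -> c e <= expR (phi x t)}) ->
  (forall a e, (e0 a <= e)%N -> {ae m, forall x w, Einf (theta x) w ->
     w 0%N = e -> (Lpos A phi x (fun _ => 1%R) w <= (c a / 2)%:E)%E}) ->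
  (forall x, 0 < lam x) -> {ae m, forall x, lam x <= L} ->
  (forall z a, exists b, A z a b) ->
  {ae m, forall x, ((2^-1)%:E <= nu x [set t | Einf x t /\ t 0%N \in F])%E} ->
  {ae m, forall x j, good_point (iter j theta x)}.
Proof.
move=> mtheta thetaP conf c0 c_le L1_le lam0 lamL succ halfF.
apply: ae_orbit mtheta thetaP _.
have ae_c_le : {ae m, forall x e t, Einf x t -> t 0%N = e -> c e <= expR (phi x t)}.
  exact: ae_foralln.
have ae_L1_le : {ae m, forall x a e, (e0 a <= e)%N -> forall w, Einf (theta x) w ->
    w 0%N = e -> (Lpos A phi x (fun _ => 1%R) w <= (c a / 2)%:E)%E}.
  apply: ae_foralln => a; apply: ae_foralln => e.
  have [/L1_le|_] := leqP (e0 a) e; first by apply: filterS => x ? _.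
  by apply: aeW => x.
apply: filterS (filterI conf (filterI ae_c_le (filterI ae_L1_le (filterI lamL halfF)))).
by move=> x [confx [c_lex [L1_lex [lamLx halfFx]]]]; exact: good_point_intro.
Qed.

Lemma nu_cyl_ge_mixing x k w (B0 M : nat) (r : R) :
  (forall j, good_point (iter j theta x)) ->
  Ewords x k w -> all (fun e => e < B0)%N w ->
  (forall f, f \in F -> exists v, size v = M.+1 /\
     Ewords (iter k theta x) M.+2 (nth 0%N w k :: v ++ [:: f])) ->
  0 <= r -> (forall e, (e < reach_bound e0 B0 M.+2)%N -> r * L <= c e) ->
  ((r ^+ (k + M.+2) / 2)%:E <= nu x (cyl x w))%E.
Proof.
move=> good Ew Bw mix r0 rLc; pose B := reach_bound e0 B0 M.+2.
have [sw _] := Ew; pose a := nth 0%N w k.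
have v_ex f : exists u, size u = M.+1 /\
    (f \in F -> Ewords (iter k theta x) M.+2 (a :: u ++ [:: f])).
  have [/mix [u [su Eu]]|fF] := boolP (f \in F); first by exists u.
  by exists (nseq M.+1 0%N); rewrite size_nseq.
have [v v_spec] := choice v_ex.
pose W f := w ++ (v f ++ [:: f]).
have sW f : size (W f) = (k + M.+3)%N by rewrite !size_cat sw (v_spec f).1 /=; lia.
have W_small f : f \in F -> all (fun e => e < B)%N (W f).
  move=> fF; rewrite all_cat; apply/andP; split.
    by apply: sub_all Bw => e eB; apply: leq_trans eB (reach_bound_mono _ _ (leq0n _)).
  have aB0 : (a < B0)%N by apply: (all_nthP 0%N Bw); rewrite sw.
  have trans_lt j b e : A (iter j theta (iter k theta x)) b e -> (e < e0 b)%N.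
    by rewrite -iterD; have [_ + _] := good (j + k)%N; apply.
  by case/andP: (Ewords_reach_bound trans_lt ((v_spec f).2 fF) aB0).
pose y := iter (k + M.+2) theta x.
have W_chain f : f \in F ->
    ((r ^+ (k + M.+2))%:E * nu y (cyl y [:: f]) <= nu x (cyl x (W f)))%E.
  move=> fF; move: (sW f) (W_small f fF); case Ww : (W f) => [|w0 u] su uB.
    by rewrite /= addnS in su.
  have {}su : size u = (k + M.+2)%N by apply: succn_inj; rewrite -addnS -su.
  have := @nu_cyl_chain _ _ _ theta A phi nu lam c L x r B u w0.
  rewrite su -Ww [last _ _](_ : _ = f); last first.
    by have := congr1 (last 0%N) Ww; rewrite /= /W !last_cat.
  apply => // [j||]; first by have [] := good j.
    exact: Ewords_cat Ew ((v_spec f).2 fF).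
  by rewrite Ww.
apply: le_trans (sum_cyl_extensions_le theta A (nu x) x (N := (k + M.+2)%N)
  (W := W) (undup_uniq F) _ _).
- have [_ _ halfF] := good (k + M.+2)%N.
  rewrite EFinM -/y; apply: le_trans (lee_wpmul2l _ halfF) _.
    by rewrite lee_fin exprn_ge0.
  rewrite -sum_cyl_heads ge0_sume_distrr; last by move=> f _; exact: measure_ge0.
  by rewrite big_seq [leRHS]big_seq; apply: lee_sum => f; rewrite mem_undup; exact: W_chain.
- by move=> f; eexists.
- move=> f; split; first by rewrite sW; lia.
  rewrite /W catA nth_cat size_cat sw (v_spec f).1.
  by rewrite (_ : (k.+1 + M.+1)%N = (k + M.+2)%N) ?ltnn ?subnn //; lia.
Qed.

Lemma uniform_nu_cyl_lower_bound (D : seq nat) (n : nat) (N : nat * nat -> nat) :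
  (forall e, 0 < c e) -> 1 <= L ->
  (forall ab n', (N ab <= n')%N -> forall x, exists w, size w = n'.+1 /\
     Ewords x n'.+2 (ab.1 :: w ++ [:: ab.2])) ->
  exists2 beta : R, 0 < beta & forall x, (forall j, good_point (iter j theta x)) ->
    forall k, (k <= n)%N -> forall w, Dwords theta A D x k w ->
    (beta%:E <= nu x (cyl x w))%E.
Proof.
move=> c0 L1 mixN; pose M := \max_(a <- D) \max_(f <- F) N (a, f).
pose B0 := (\max_(a <- D) a).+1.
pose cmin := \big[Order.min/1]_(e < reach_bound e0 B0 M.+2) c e.
have cmin0 : 0 < cmin by apply/bigmin_gtP.
pose r := cmin / L.
have r0 : 0 < r by rewrite divr_gt0 // (lt_le_trans ltr01).
have r1 : r <= 1.
  by rewrite ler_pdivrMr ?(lt_le_trans ltr01) // mul1r (le_trans (bigmin_le_id _ _ _ _)).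
exists (r ^+ (n + M.+2) / 2) => [|x goodx k kn w [Ew Dw]].
  by rewrite divr_gt0 // exprn_gt0.
apply: le_trans (nu_cyl_ge_mixing (B0 := B0) (M := M) goodx Ew _ _ (ltW r0) _).
- rewrite lee_fin ler_pM2r ?invr_gt0 //; apply: (ler_wiXn2l (ltW r0) r1).
  by rewrite leq_add2r.
- apply: sub_all Dw => e eD; rewrite ltnS.
  exact: (@leq_bigmax_seq _ D xpredT (fun a => a) e eD isT).
- move=> f fF; have aD : nth 0%N w k \in D.
    by apply: (all_nthP 0%N Dw); case: Ew => ->.
  have NM : (N (nth 0%N w k, f) <= M)%N.
    apply: leq_trans (@leq_bigmax_seq _ D xpredT (fun a => \max_(f <- F) N (a, f)) _ aD isT).
    exact: (@leq_bigmax_seq _ F xpredT (fun f => N (nth 0%N w k, f)) f fF isT).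
  by have [v [sv Ev]] := mixN _ M NM (iter k theta x); exists v.
- move=> e eB; rewrite /r divfK ?gt_eqF ?(lt_le_trans ltr01) //.
  exact: (bigmin_le _ (Ordinal eB) (fun i : 'I__ => c i)).
Qed.

End lower_bound.

Theorem lemma4p1
  (d : measure_display) (X : measurableType d) (R : realType)
  (m : probability X R) (theta thetainv : X -> X)
  (A : X -> nat -> nat -> bool) (phi : X -> Seq -> R) (alpha : R)
  (F : seq nat) (kappa : R) (nu : X -> probability Seq R) (lam : X -> R)
  (m_complete : forall N : set X, measurable N -> m N = 0%E ->
     forall B, B `<=` N -> measurable B)
  (theta_meas : measurable_fun setT theta)
  (thetainv_meas : measurable_fun setT thetainv)
  (thetaK : cancel theta thetainv) (thetainvK : cancel thetainv theta)
  (theta_pres : forall B : set X, measurable B -> m (theta @^-1` B) = m B)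
  (A_meas : forall i j, measurable [set x | A x i j])
  (mixing : forall a b : nat, exists N : nat, forall n : nat, (N <= n)%N ->
     forall x : X, exists w : seq nat, size w = n.+1 /\
       Ewords theta A x n.+2 (a :: w ++ [:: b]))
  (alpha_gt0 : 0 < alpha)
  (phi_meas : measurable_fun [set p : X * Seq | Einf theta A p.1 p.2]
                 (fun p => phi p.1 p.2))
  (phi_cont : forall x, cont_on (Einf theta A x) (phi x))
  (phi_var : exists K : R, {ae m, forall x, forall t w : Seq,
      Einf theta A x t -> Einf theta A x w -> t <> w -> t 0%N = w 0%N ->
      `|phi x t - phi x w| <= K * (@seqdist R t w) `^ alpha})
  (phi_bnd : forall e : nat, exists c C : R, 0 < c < C /\
      {ae m, forall x, forall t, Einf theta A x t -> t 0%N = e ->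
         c <= expR (phi x t) <= C})
  (phi_summ : forall eps : R, 0 < eps -> exists l0 : nat, forall l : nat,
      (l0 <= l)%N -> {ae m, forall x, forall w, Einf theta A (theta x) w ->
        (Lpos A phi x (fun t : Seq => if (l < t 0%N)%N then 1%R else 0%R) w
          <= eps%:E)%E})
  (condA : forall e : nat, exists2 M : R, 0 < M &
      {ae m, forall x, forall w, Einf theta A (theta x) w -> w 0%N = e ->
        ((M^-1)%:E <= Lpos A phi x (fun _ => 1%R) w)%E})
  (condB : forall eps : R, 0 < eps -> exists e0 : nat, forall e : nat,
      (e0 <= e)%N -> {ae m, forall x, forall w, Einf theta A (theta x) w ->
        w 0%N = e -> (Lpos A phi x (fun _ => 1%R) w <= eps%:E)%E})
  (kappa_bnd : 0 < kappa < 4^-1)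
  (condC : {ae m, forall x, forall w w', Einf theta A (theta x) w ->
      Einf theta A (theta x) w' -> w' 0%N \in F ->
      (Lpos A phi x (fun t : Seq => if t 0%N \in F then 0%R else 1%R) w
        <= kappa%:E * Lpos A phi x (fun _ => 1%R) w')%E})
  (nu_supp : forall x, nu x (Einf theta A x) = 1%E)
  (nu_meas : forall B : set Seq, measurable B ->
      measurable_fun [set: X] (fun x : X => nu x B))
  (lam_gt0 : forall x, 0 < lam x)
  (lam_meas : measurable_fun setT lam)
  (lam_bnd : exists K : R, {ae m, forall x, `|ln (lam x)| <= K})
  (conformal : {ae m, forall x, forall g : Seq -> R,
      bounded_on (Einf theta A x) g -> cont_on (Einf theta A x) g ->
      (\int[nu (theta x)]_(w in Einf theta A (theta x))
          (Lop A phi x g w)%:E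
        = (lam x)%:E * \int[nu x]_(w in Einf theta A x) (g w)%:E)%E})
  (nu_F : {ae m, forall x,
      ((2^-1)%:E <= nu x [set t | Einf theta A x t /\ t 0%N \in F])%E}) :
  forall (D : seq nat) (n : nat), exists2 beta : R, 0 < beta &
    {ae m, forall x, forall k : nat, (k <= n)%N ->
       forall w : seq nat, Dwords theta A D x k w ->
       (beta%:E <= nu x (cyl theta A x w))%E}.
Proof.
move=> D n.
have c_ex e : exists ce : R, 0 < ce /\ {ae m, forall x t, Einf theta A x t ->
    t 0%N = e -> ce <= expR (phi x t)}.
  have [ce [C [/andP[ce0 _] ceC]]] := phi_bnd e; exists ce; split => //.
  by apply: filterS ceC => x ceC t Et t0; case/andP: (ceC t Et t0).
have [c c_spec] := choice c_ex; have c0 e : 0 < c e := (c_spec e).1.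
have e0_ex a : exists e0 : nat, forall e, (e0 <= e)%N -> {ae m, forall x w,
    Einf theta A (theta x) w -> w 0%N = e ->
    (Lpos A phi x (fun _ => 1%R) w <= (c a / 2)%:E)%E}.
  by apply: condB; rewrite divr_gt0.
have [e0 e0_spec] := choice e0_ex.
have [N mixN] := choice (fun ab : nat * nat => mixing ab.1 ab.2).
have succ z a : exists b, A z a b.
  have [w [_ [_ Ew]]] := mixN (a, a) _ (leqnn _) z.
  by exists (nth 0%N (w ++ [:: a]) 0); exact: (Ew 0%N isT).
have [K lamK] := lam_bnd; pose L := expR `|K|.
have lamL : {ae m, forall x, lam x <= L}.
  apply: filterS lamK => x lnlamK; rewrite -[lam x]lnK ?posrE ?lam_gt0 // ler_expR.
  exact: le_trans (ler_norm _) (le_trans lnlamK (ler_norm _)).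
have good := ae_good_orbit theta_meas theta_pres conformal c0 (fun e => (c_spec e).2)
  e0_spec lam_gt0 lamL succ nu_F.
have L1 : 1 <= L by rewrite -expR0 ler_expR.
have [beta beta0 nu_ge] := uniform_nu_cyl_lower_bound phi nu lam e0 F D n c0 L1 mixN.
by exists beta => //; apply: filterS good => x /nu_ge.
Qed.
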